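(* Let $L>0$, $K>0$, $L_p a>0$, $t_0>0$, $\nu_m>0$, and let $\sigma_1,\sigma_2,p_0,w_0,w_D,q_l$ be real constants. Put $\beta = \frac{L_p a L^2}{K}$. Let $p,u,w$ be twice continuously differentiable functions on $[0,1]$ satisfying $$\frac{1}{t_0}\frac{d}{dx}\Big(\nu_m \frac{dp}{dx}\Big) - \sigma_1\frac{d}{dx}\Big(\nu_m \frac{du}{dx}\Big) - \sigma_2\frac{d}{dx}\Big(\nu_m\frac{dw}{dx}\Big) + q_U - q_l = 0 \quad\text{on } [0,1],$$ where $$q_U(x) = \beta\Big(\frac{1}{t_0}(p_0-p(x)) + \sigma_1 u(x) + \sigma_2 (w(x)-w_0)\Big),$$ together with the boundary conditions $p(0)=1$, $u(0)=1$, $w(0)=w_D$, $p'(1)=u'(1)=w'(1)=0$. Define $$j_U(x) = L\nu_m\Big(-\frac{1}{t_0}p'(x) + \sigma_1 u'(x) + \sigma_2 w'(x)\Big).$$ Then $j_U = \frac{K\nu_m}{L_p a L}\, q_U'$ and, with $$\lambda=\sqrt{\frac{L_p a L^2}{K\nu_m}},\quad q_0 = \beta\Big(\frac{1}{t_0}(p_0-1)+\sigma_1+\sigma_2 (w_D - w_0)\Big),\quad C_1=(q_0-q_l)\frac{e^{2\lambda}}{1+e^{2\lambda}},\quad C_2=(q_0-q_l)\frac{1}{1+e^{2\lambda}},$$ one has for all $x\in[0,1]$ $$q_U(x) = C_1 e^{-\lambda x} + C_2 e^{\lambda x} + q_l,\qquad j_U(x) = \frac{L}{\lambda}\big(-C_1e^{-\lambda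 x}+C_2 e^{\lambda x}\big).$$
   Context: This is the steady-state fluid balance equation of a non-dimensionalised model of fluid, glucose and albumin transport in peritoneal dialysis, under the assumptions that the reflection coefficients in tissue and capillary wall coincide ($S_G=S_{TG}$, $S_A=S_{TA}$) and that the fractional void volume $\nu$ equals the constant $\nu_m$. Here $x\in[0,1]$ is the non-dimensional distance from the peritoneal surface, $p$ the non-dimensional hydrostatic pressure, $u$ and $w$ non-dimensional glucose and albumin concentrations, $q_U$ the density of fluid flux from blood to tissue, $j_U$ the fluid flux across the tissue, $q_l$ the lymphatic flux density; $w_D$ is the non-dimensional albumin concentration in dialysate and $w_0$ that in blood. *)

From Stdlib Require Import Reals.
From Coquelicot Require Import Coquelicot.
Open Scope R_scope.

(* f is twice continuously differentiable at every point of [0,1]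
   (derivatives in the two-sided sense of Coquelicot). *)
Definition C2_on_01 (f : R -> R) : Prop :=
  forall x, 0 <= x <= 1 ->
    ex_derive f x /\ ex_derive (Derive f) x /\ continuous (Derive (Derive f)) x.

Definition qU (beta t0 sigma1 sigma2 p0 w0 : R) (p u w : R -> R) (x : R) : R :=
  beta * ((1 / t0) * (p0 - p x) + sigma1 * u x + sigma2 * (w x - w0)).

Definition jU (L nu_m t0 sigma1 sigma2 : R) (p u w : R -> R) (x : R) : R :=
  L * nu_m * (- (1 / t0) * Derive p x + sigma1 * Derive u x + sigma2 * Derive w x).

(* The balance equation says that the flux j_U and the shifted density Q := q_U - q_l satisfy
   Q' = (lambda^2 / L) j_U and j_U' = L Q, with Q(0) = q_0 - q_l and j_U(1) = 0.  The stated
   exponentials solve this two-point problem, and it has at most one solution: for the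
   difference (D, H) of two solutions, D H is nondecreasing with vanishing endpoint values,
   so D H = 0, hence D^2 and then H are constant, and both vanish. *)
From Stdlib Require Import Reals Lra.
From Coquelicot Require Import Coquelicot.
Open Scope R_scope.

Lemma mean_value_segment (f df : R -> R) (s t x y : R) :
  (forall z, s <= z <= t -> is_derive f z (df z)) ->
  s <= x -> x <= y -> y <= t ->
  exists c, x <= c <= y /\ f y - f x = df c * (y - x).
Proof.
  intros Hf Hsx Hxy Hyt.
  destruct (MVT_gen f x y df) as [c [Hc Hfc]].
  - intros z Hz. apply Hf. rewrite Rmin_left, Rmax_right in Hz; lra.
  - intros z Hz. rewrite Rmin_left, Rmax_right in Hz by lra.
    apply continuity_pt_filterlim.
    apply (ex_derive_continuous (K := R_AbsRing) (V := R_NormedModule)).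
    exists (df z). apply Hf; lra.
  - exists c. rewrite Rmin_left, Rmax_right in Hc by lra. split; [exact Hc | exact Hfc].
Qed.

Lemma nondecreasing_of_derive_nonneg (f df : R -> R) (s t : R) :
  (forall z, s <= z <= t -> is_derive f z (df z)) ->
  (forall z, s <= z <= t -> 0 <= df z) ->
  forall x y, s <= x -> x <= y -> y <= t -> f x <= f y.
Proof.
  intros Hf Hdf x y Hsx Hxy Hyt.
  destruct (mean_value_segment f df s t x y Hf Hsx Hxy Hyt) as [c [Hc Hfc]].
  pose proof (Hdf c ltac:(lra)). nra.
Qed.

Lemma constant_of_derive_zero (f : R -> R) (s t : R) :
  (forall z, s <= z <= t -> is_derive f z 0) ->
  forall x y, s <= x <= t -> s <= y <= t -> f x = f y.
Proof.
  intros Hf.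
  assert (Hle : forall x y, s <= x -> x <= y -> y <= t -> f x = f y).
  { intros x y Hsx Hxy Hyt.
    destruct (mean_value_segment f (fun _ => 0) s t x y Hf Hsx Hxy Hyt) as [c [_ Hfc]].
    lra. }
  intros x y Hx Hy. destruct (Rle_lt_dec x y).
  - apply Hle; lra.
  - symmetry. apply Hle; lra.
Qed.

Section TwoPointProblem.

Variables (s t a b : R) (Q J : R -> R).
Hypotheses (Ha : 0 <= a) (Hb : 0 <= b).
Hypothesis HQ : forall x, s <= x <= t -> is_derive Q x (a * J x).
Hypothesis HJ : forall x, s <= x <= t -> is_derive J x (b * Q x).
Hypotheses (HQs : Q s = 0) (HJt : J t = 0).

Lemma two_point_product_zero x : s <= x <= t -> Q x * J x = 0.
Proof.
  intros Hx.
  assert (HQJ : forall z, s <= z <= t ->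
    is_derive (fun y => Q y * J y) z (a * (J z * J z) + b * (Q z * Q z))).
  { intros z Hz.
    replace (a * (J z * J z) + b * (Q z * Q z)) with (a * J z * J z + Q z * (b * Q z)) by ring.
    apply (is_derive_mult Q J); auto. intros; apply Rmult_comm. }
  pose proof (nondecreasing_of_derive_nonneg _ _ s t HQJ) as Hmono.
  assert (Hnonneg : forall z, s <= z <= t -> 0 <= a * (J z * J z) + b * (Q z * Q z)).
  { intros z _. apply Rplus_le_le_0_compat; apply Rmult_le_pos; nra. }
  pose proof (Hmono Hnonneg s x ltac:(lra) ltac:(lra) ltac:(lra)).
  pose proof (Hmono Hnonneg x t ltac:(lra) ltac:(lra) ltac:(lra)).
  cbv beta in *. rewrite HQs, HJt in *. lra.
Qed.

Lemma two_point_problem_trivial x : s <= x <= t -> Q x = 0 /\ J x = 0.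
Proof.
  intros Hx.
  assert (HQ2 : forall z, s <= z <= t -> is_derive (fun y => Q y * Q y) z 0).
  { intros z Hz.
    replace 0 with (2 * a * (Q z * J z)) by (rewrite two_point_product_zero by exact Hz; ring).
    replace (2 * a * (Q z * J z)) with (a * J z * Q z + Q z * (a * J z)) by ring.
    apply (is_derive_mult Q Q); auto. intros; apply Rmult_comm. }
  assert (HQ0 : forall z, s <= z <= t -> Q z = 0).
  { intros z Hz.
    pose proof (constant_of_derive_zero _ s t HQ2 z s Hz ltac:(lra)) as E.
    cbv beta in E. rewrite HQs in E. nra. }
  split; [now apply HQ0|].
  rewrite <- HJt. apply (constant_of_derive_zero J s t); [|lra|lra].
  intros z Hz. replace 0 with (b * Q z) by (rewrite HQ0 by exact Hz; ring). auto.
Qed.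

End TwoPointProblem.

Lemma exp_two_point_solution (a b c q lambda : R) (Q J : R -> R) :
  0 < a -> 0 < b -> 0 < lambda -> lambda * lambda = a * b ->
  (forall x, 0 <= x <= 1 -> is_derive Q x (a * J x)) ->
  (forall x, 0 <= x <= 1 -> is_derive J x (b * (Q x - c))) ->
  Q 0 = q -> J 1 = 0 ->
  let C1 := (q - c) * (exp (2 * lambda) / (1 + exp (2 * lambda))) in
  let C2 := (q - c) * (1 / (1 + exp (2 * lambda))) in
  forall x, 0 <= x <= 1 ->
    Q x = C1 * exp (- lambda * x) + C2 * exp (lambda * x) + c
    /\ J x = b / lambda * (- C1 * exp (- lambda * x) + C2 * exp (lambda * x)).
Proof.
  intros Ha Hb Hlam Hlam2 HQ HJ HQ0 HJ1 C1 C2 x Hx.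
  set (S := fun y => C1 * exp (- lambda * y) + C2 * exp (lambda * y)).
  set (T := fun y => b / lambda * (- C1 * exp (- lambda * y) + C2 * exp (lambda * y))).
  assert (He2 : exp (2 * lambda) = exp lambda * exp lambda)
    by (rewrite <- exp_plus; f_equal; ring).
  pose proof (exp_pos lambda) as Hexp.
  assert (Hb_lambda : b = lambda * lambda / a) by (rewrite Hlam2; field; lra).
  assert (Q x - c - S x = 0 /\ J x - T x = 0) as [HD HH].
  { apply (two_point_problem_trivial 0 1 a b (fun y => Q y - c - S y) (fun y => J y - T y));
      try lra.
    - intros y Hy. unfold S. auto_derive.
      + exists (a * J y). auto.
      + replace (Derive (fun z => Q z) y) with (a * J y)
          by (symmetry; apply is_derive_unique, HQ, Hy).
        unfold T. rewrite Hb_lambda. field. lra.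
    - intros y Hy. unfold T. auto_derive.
      + exists (b * (Q y - c)). auto.
      + replace (Derive (fun z => J z) y) with (b * (Q y - c))
          by (symmetry; apply is_derive_unique, HJ, Hy).
        unfold S. rewrite Hb_lambda. field. lra.
    - unfold S, C1, C2. rewrite HQ0, !Rmult_0_r, exp_0. field. nra.
    - unfold T, C1, C2. rewrite HJ1, !Rmult_1_r, He2, exp_Ropp. field. split; nra. }
  unfold S, T in *. split; lra.
Qed.

Lemma is_derive_qU (beta L nu_m t0 sigma1 sigma2 p0 w0 : R) (p u w : R -> R) (x : R) :
  L <> 0 -> nu_m <> 0 -> ex_derive p x -> ex_derive u x -> ex_derive w x ->
  is_derive (qU beta t0 sigma1 sigma2 p0 w0 p u w) x
    (beta / (L * nu_m) * jU L nu_m t0 sigma1 sigma2 p u w x).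
Proof.
  intros HL Hnu Hp Hu Hw. unfold qU, jU. auto_derive; auto.
  change (fun y => p y) with p; change (fun y => u y) with u; change (fun y => w y) with w.
  rewrite <- (Rmult_assoc (beta / (L * nu_m))).
  replace (beta / (L * nu_m) * (L * nu_m)) with beta by (field; split; assumption).
  ring.
Qed.

Lemma is_derive_jU (beta L nu_m t0 sigma1 sigma2 p0 w0 ql : R) (p u w : R -> R) (x : R) :
  ex_derive (Derive p) x -> ex_derive (Derive u) x -> ex_derive (Derive w) x ->
  (1 / t0) * Derive (fun y => nu_m * Derive p y) x
  - sigma1 * Derive (fun y => nu_m * Derive u y) x
  - sigma2 * Derive (fun y => nu_m * Derive w y) x
  + qU beta t0 sigma1 sigma2 p0 w0 p u w x - ql = 0 ->
  is_derive (jU L nu_m t0 sigma1 sigma2 p u w) x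
    (L * (qU beta t0 sigma1 sigma2 p0 w0 p u w x - ql)).
Proof.
  intros Hp Hu Hw Hbalance. rewrite !Derive_scal in Hbalance.
  replace (qU beta t0 sigma1 sigma2 p0 w0 p u w x - ql)
    with (nu_m * (- (1 / t0) * Derive (Derive p) x + sigma1 * Derive (Derive u) x
                  + sigma2 * Derive (Derive w) x)) by lra.
  unfold jU. auto_derive; auto.
  change (fun y => Derive p y) with (Derive p); change (fun y => Derive u y) with (Derive u).
  change (fun y => Derive w y) with (Derive w). ring.
Qed.

Theorem mainTheorem2
  (L K Lpa t0 nu_m sigma1 sigma2 p0 w0 wD ql : R)
  (HL : 0 < L) (HK : 0 < K) (HLpa : 0 < Lpa) (Ht0 : 0 < t0) (Hnu : 0 < nu_m)
  (p u w : R -> R)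
  (Hp : C2_on_01 p) (Hu : C2_on_01 u) (Hw : C2_on_01 w)
  (Heq : forall x, 0 <= x <= 1 ->
     (1 / t0) * Derive (fun y => nu_m * Derive p y) x
     - sigma1 * Derive (fun y => nu_m * Derive u y) x
     - sigma2 * Derive (fun y => nu_m * Derive w y) x
     + qU (Lpa * L ^ 2 / K) t0 sigma1 sigma2 p0 w0 p u w x - ql = 0)
  (Hp0 : p 0 = 1) (Hu0 : u 0 = 1) (Hw0 : w 0 = wD)
  (Hp1 : Derive p 1 = 0) (Hu1 : Derive u 1 = 0) (Hw1 : Derive w 1 = 0) :
  let beta := Lpa * L ^ 2 / K in
  let lambda := sqrt (Lpa * L ^ 2 / (K * nu_m)) in
  let q0 := beta * ((1 / t0) * (p0 - 1) + sigma1 + sigma2 * (wD - w0)) in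
  let C1 := (q0 - ql) * (exp (2 * lambda) / (1 + exp (2 * lambda))) in
  let C2 := (q0 - ql) * (1 / (1 + exp (2 * lambda))) in
  forall x, 0 <= x <= 1 ->
    jU L nu_m t0 sigma1 sigma2 p u w x
      = K * nu_m / (Lpa * L) * Derive (qU beta t0 sigma1 sigma2 p0 w0 p u w) x
    /\ qU beta t0 sigma1 sigma2 p0 w0 p u w x
      = C1 * exp (- lambda * x) + C2 * exp (lambda * x) + ql
    /\ jU L nu_m t0 sigma1 sigma2 p u w x
      = L / lambda * (- C1 * exp (- lambda * x) + C2 * exp (lambda * x)).
Proof.
  intros beta lambda q0 C1 C2 x Hx.
  assert (HLpaL2 : 0 < Lpa * L ^ 2) by (apply Rmult_lt_0_compat; [lra | apply pow_lt; lra]).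
  assert (Hratio : 0 < Lpa * L ^ 2 / (K * nu_m)) by (apply Rdiv_lt_0_compat; nra).
  assert (Hbeta : 0 < beta / (L * nu_m))
    by (apply Rdiv_lt_0_compat; [apply Rdiv_lt_0_compat |]; nra).
  assert (Hlam : 0 < lambda) by now apply sqrt_lt_R0.
  assert (Hlam2 : lambda * lambda = beta / (L * nu_m) * L)
    by (unfold lambda; rewrite sqrt_sqrt by lra; unfold beta; field; lra).
  assert (HqU : forall y, 0 <= y <= 1 -> is_derive (qU beta t0 sigma1 sigma2 p0 w0 p u w) y
                 (beta / (L * nu_m) * jU L nu_m t0 sigma1 sigma2 p u w y)).
  { intros y Hy. destruct (Hp y Hy), (Hu y Hy), (Hw y Hy).
    apply is_derive_qU; auto; lra. }
  assert (HjU : forall y, 0 <= y <= 1 -> is_derive (jU L nu_m t0 sigma1 sigma2 p u w) y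
                 (L * (qU beta t0 sigma1 sigma2 p0 w0 p u w y - ql))).
  { intros y Hy. destruct (Hp y Hy) as [_ []], (Hu y Hy) as [_ []], (Hw y Hy) as [_ []].
    apply is_derive_jU; auto. }
  assert (Hj1 : jU L nu_m t0 sigma1 sigma2 p u w 1 = 0)
    by (unfold jU; rewrite Hp1, Hu1, Hw1; ring).
  assert (Hq0 : qU beta t0 sigma1 sigma2 p0 w0 p u w 0 = q0)
    by (unfold qU, q0; rewrite Hp0, Hu0, Hw0; ring).
  split.
  - rewrite (is_derive_unique _ _ _ (HqU x Hx)). unfold beta. field. lra.
  - exact (exp_two_point_solution _ _ ql q0 lambda _ _ Hbeta HL Hlam Hlam2 HqU HjU Hq0 Hj1 x Hx).
Qed.
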